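(* Let $h$ be a hospital whose utility is proportional to total wage, i.e. $f_h(Y)=\gamma_h\,w_h(Y)$ for all $Y\subseteq X_h$ for some constant $\gamma_h>0$. Define $\mathrm{Ch}_h:2^{X_h}\to2^{X_h}$ as follows: given $X'\subseteq X_h$ (with $\mathrm{Ch}_h(\emptyset)=\emptyset$), sort $X'$ in non-decreasing order of wage (ties broken by a fixed order) as $x^{(1)},\dots,x^{(|X'|)}$; start with $Y=\emptyset$ and for $i=1,\dots,|X'|-1$ add $x^{(i)}$ to $Y$ if $w_h(Y\cup\{x^{(i)}\})<B_h$; finally add $x^{(|X'|)}$ (a highest-wage contract) to $Y$ and return $Y$. Then $\mathrm{Ch}_h$ satisfies SUB, IRC, LAD and COM.
   Context: Hospital $h$ has a finite set $X_h$ of contracts $x$ with wages $x_W$, $0<x_W\le B_h$, where $B_h>0$ is its budget. $w_h(Y)=\sum_{x\in Y}x_W$ for $Y\subseteq X_h$. For $\mathrm{Ch}_h$ with $\mathrm{Ch}_h(Y)\subseteq Y$: SUB means for all $Y''\subseteq Y'\subseteq X_h$, $Y''\setminus\mathrm{Ch}_h(Y'')\subseteq Y'\setminus\mathrm{Ch}_h(Y')$; IRC means for $Y'\subseteq X_h$, $Y''\subseteq X_h\setminus Y'$, if $\mathrm{Ch}_h(Y'\cup Y'')\subseteq Y'$ then $\mathrm{Ch}_h(Y')=\mathrm{Ch}_h(Y'\cup Y'')$; LAD means for all $Y''\subseteq Y'\subseteq X_h$, $|\mathrm{Ch}_h(Y'')|\le|\mathrm{Ch}_h(Y')|$; COM means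 for all $Y''\subseteq Y'\subseteq X_h$ with $w_h(Y'')\le\max\{B_h,w_h(\mathrm{Ch}_h(Y'))\}$, $f_h(\mathrm{Ch}_h(Y'))\ge f_h(Y'')$. *)

From HB Require Import structures.
From mathcomp Require Import all_boot all_order all_algebra.
Set Implicit Arguments. Unset Strict Implicit. Unset Printing Implicit Defensive.
Import Order.TTheory GRing.Theory Num.Theory.
Local Open Scope ring_scope.

(* Contracts of hospital h: the finite type T (X_h = [set: T]).
   Wages w : T -> R, budget B. *)

Definition wsum (T : finType) (R : numDomainType) (w : T -> R) (Y : {set T}) : R :=
  \sum_(x in Y) w x.

(* Order "non-decreasing wage, ties broken by the fixed order given by the
   injective rank r" *)
Definition wage_le (T : finType) (R : numDomainType) (w : T -> R) (r : T -> nat)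
  (x y : T) : bool :=
  (w x < w y) || ((w x == w y) && (r x <= r y)%N).

Definition greedy_step (T : finType) (R : numDomainType) (w : T -> R) (B : R)
  (Y : {set T}) (x : T) : {set T} :=
  if wsum w (x |: Y) < B then x |: Y else Y.

Definition Ch_greedy (T : finType) (R : numDomainType) (w : T -> R) (B : R)
  (r : T -> nat) (X' : {set T}) : {set T} :=
  match sort (wage_le w r) (enum X') with
  | [::] => set0
  | x0 :: s' => (last x0 s') |: foldl (greedy_step w B) set0 (belast x0 s')
  end.

Definition SUB (T : finType) (Ch : {set T} -> {set T}) : Prop :=
  forall Y'' Y' : {set T}, Y'' \subset Y' -> Y'' :\: Ch Y'' \subset Y' :\: Ch Y'.

Definition IRC (T : finType) (Ch : {set T} -> {set T}) : Prop :=
  forall Y' Y'' : {set T}, [disjoint Y'' & Y'] ->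
    Ch (Y' :|: Y'') \subset Y' -> Ch Y' = Ch (Y' :|: Y'').

Definition LAD (T : finType) (Ch : {set T} -> {set T}) : Prop :=
  forall Y'' Y' : {set T}, Y'' \subset Y' -> (#|Ch Y''| <= #|Ch Y'|)%N.

Definition COM (T : finType) (R : realDomainType) (w : T -> R) (B : R)
  (f : {set T} -> R) (Ch : {set T} -> {set T}) : Prop :=
  forall Y'' Y' : {set T}, Y'' \subset Y' ->
    wsum w Y'' <= Num.max B (wsum w (Ch Y')) -> f Y'' <= f (Ch Y').

From HB Require Import structures.
From mathcomp Require Import all_boot all_order all_algebra.
Import Order.TTheory GRing.Theory Num.Theory.
Local Open Scope ring_scope.
Set Implicit Arguments. Unset Strict Implicit. Unset Printing Implicit Defensive.

(* Call the prefix of X' at x the set of contracts of X' that come no later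
   than x in the wage order.  Once the greedy loop rejects a contract it
   rejects every later one, since those are at least as expensive and the
   accepted set does not change.  So it accepts exactly the affordable
   contracts, those whose prefix costs less than B, and Ch(X') consists of
   these and the top contract.  Prefixes only grow with X', which gives SUB
   and COM.  An exchange argument shows that a subset has no more affordable
   contracts, which gives LAD.  IRC then follows from SUB and LAD, as it
   does for every choice function. *)

Lemma SUB_LAD_IRC (T : finType) (Ch : {set T} -> {set T}) :
  (forall Y, Ch Y \subset Y) -> SUB Ch -> LAD Ch -> IRC Ch.
Proof.
move=> Ch_sub Ch_SUB Ch_LAD Y1 Y2 _ ChU_Y1; set U := Y1 :|: Y2.
have sY1U : Y1 \subset U := subsetUl Y1 Y2.
have ChU_ChY1 : Ch U \subset Ch Y1.
  apply/subsetP => x xChU; apply: contraT => xChY1.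
  have : x \in U :\: Ch U.
    by apply: (subsetP (Ch_SUB _ _ sY1U)); rewrite in_setD xChY1 (subsetP ChU_Y1).
  by rewrite in_setD xChU.
by apply/eqP; rewrite eq_sym eqEcard ChU_ChY1 Ch_LAD.
Qed.

Section GreedyChoice.

Variables (T : finType) (R : realDomainType) (w : T -> R) (r : T -> nat) (B : R).
Hypotheses (w_gt0 : forall x, 0 < w x) (r_inj : injective r).

Let w_ge0 x : 0 <= w x := ltW (w_gt0 x).

Implicit Types (S X Y : {set T}) (x y z m : T).

Local Notation wle := (wage_le w r).

Lemma wage_le_refl : reflexive wle.
Proof. by move=> x; rewrite /wage_le eqxx leqnn orbT. Qed.

Lemma wage_le_total : total wle.
Proof. by move=> x y; rewrite /wage_le; case: ltgtP => //= _; apply: leq_total. Qed.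

Lemma wage_le_trans : transitive wle.
Proof.
move=> y x z; rewrite /wage_le.
move=> /orP[lt_xy|/andP[/eqP-> le_xy]] /orP[lt_yz|/andP[/eqP<- le_yz]].
- by rewrite (lt_trans lt_xy lt_yz).
- by rewrite lt_xy.
- by rewrite lt_yz.
- by rewrite eqxx (leq_trans le_xy le_yz) orbT.
Qed.

Lemma wage_le_anti x y : wle x y -> wle y x -> x = y.
Proof.
rewrite /wage_le.
move=> /orP[lt_xy|/andP[/eqP e_xy le_xy]] /orP[lt_yx|/andP[/eqP e_yx le_yx]].
- by move: (lt_trans lt_xy lt_yx); rewrite ltxx.
- by move: lt_xy; rewrite e_yx ltxx.
- by move: lt_yx; rewrite e_xy ltxx.
- by apply: r_inj; apply/eqP; rewrite eqn_leq le_xy le_yx.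
Qed.

Lemma wage_le_wage x y : wle x y -> w x <= w y.
Proof. by rewrite /wage_le => /orP[/ltW|/andP[/eqP-> _]]. Qed.

Lemma ex_wage_min S x0 :
  x0 \in S -> exists2 z, z \in S & {in S, forall y, wle z y}.
Proof.
move=> x0S; have [z zS zmin] := @extremumP _ _ wle x0 (fun x => x \in S) id
  wage_le_refl wage_le_trans wage_le_total x0S.
by exists z.
Qed.

Lemma ex_wage_max S x0 :
  x0 \in S -> exists2 z, z \in S & {in S, forall y, wle y z}.
Proof.
move=> x0S; have [z zS zmax] := @extremumP _ _ (fun x y => wle y x) x0
  (fun x => x \in S) id wage_le_refl (fun y x z le_yx le_zy => wage_le_trans le_zy le_yx)
  (fun x y => wage_le_total y x) x0S.
by exists z.
Qed.

Lemma wsumU1 x (A : {set T}) : x \notin A -> wsum w (x |: A) = w x + wsum w A.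
Proof. by move=> xA; rewrite /wsum big_setU1. Qed.

Lemma wsum_subset (A1 A2 : {set T}) : A1 \subset A2 -> wsum w A1 <= wsum w A2.
Proof.
move=> sA; rewrite /wsum [leRHS](big_setID A1) /= (setIidPr sA) lerDl.
exact: sumr_ge0.
Qed.

Lemma wsum_exchange (A1 A2 : {set T}) c : 0 <= c ->
  {in A1 :\: A2, forall x, w x <= c} -> {in A2 :\: A1, forall x, c <= w x} ->
  (#|A1| < #|A2|)%N -> wsum w A1 + c <= wsum w A2.
Proof.
move=> c_ge0 le_c ge_c lt_A.
have splitI (A C : {set T}) : wsum w A = wsum w (A :&: C) + wsum w (A :\: C).
  by rewrite /wsum (big_setID C).
rewrite (splitI A1 A2) (splitI A2 A1) setIC -addrA lerD2l.
have lt_D : (#|A1 :\: A2| < #|A2 :\: A1|)%N.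
  by move: lt_A; rewrite -(cardsID A2 A1) -(cardsID A1 A2) setIC ltn_add2l.
apply: (le_trans _ (_ : c *+ #|A2 :\: A1| <= _)); last first.
  by rewrite /wsum -sumr_const; apply: ler_sum.
apply: (le_trans _ (ler_wpMn2l c_ge0 lt_D)); rewrite mulrS addrC lerD2l.
by rewrite /wsum -sumr_const; apply: ler_sum.
Qed.

Definition prefix (S : {set T}) (x : T) : {set T} := [set y in S | wle y x].

Definition affordable (S : {set T}) : {set T} :=
  [set y in S | wsum w (prefix S y) < B].

Definition greedy_set (S : {set T}) : {set T} :=
  [set x in S | (prefix S x == S) || (wsum w (prefix S x) < B)].

Lemma prefix_sub S x : prefix S x \subset S.
Proof. by apply/subsetP => y /setIdP[]. Qed.

Lemma prefixS S1 S2 x : S1 \subset S2 -> prefix S1 x \subset prefix S2 x.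
Proof.
by move=> sS; apply/subsetP => y /setIdP[/(subsetP sS) yS2 le_yx]; rewrite inE yS2.
Qed.

Lemma prefix_topP S x : reflect {in S, forall y, wle y x} (prefix S x == S).
Proof.
apply: (iffP eqP) => [<- y /setIdP[]//|top].
by apply/setP => y; rewrite inE; case: (boolP (y \in S)) => //= /top.
Qed.

Lemma setU1_top S x : {in S, forall y, wle y x} -> {in x |: S, forall y, wle y x}.
Proof. by move=> top y /setU1P[->|/top//]; apply: wage_le_refl. Qed.

Lemma prefix_setU1_top S x y : x \notin S -> {in S, forall y, wle y x} ->
  y \in S -> prefix (x |: S) y = prefix S y.
Proof.
move=> xS top yS; apply/setP => t; rewrite !inE.
have [->|_] //= := eqVneq t x; rewrite (negbTE xS); apply/negP => le_xy.
by rewrite (wage_le_anti le_xy (top y yS)) yS in xS.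
Qed.

Lemma affordable_sub S : affordable S \subset S.
Proof. by apply/subsetP => y /setIdP[]. Qed.

Lemma affordable_greedy S : affordable S \subset greedy_set S.
Proof. by apply/subsetP => y /setIdP[yS lt_yB]; rewrite inE yS lt_yB orbT. Qed.

Lemma greedy_set_sub S : greedy_set S \subset S.
Proof. by apply/subsetP => y /setIdP[]. Qed.

Lemma affordable_downward S y z :
  y \in affordable S -> z \in S -> wle z y -> z \in affordable S.
Proof.
move=> /setIdP[_ lt_yB] zS le_zy; rewrite inE zS /=.
apply: le_lt_trans lt_yB; apply: wsum_subset; apply/subsetP => t /setIdP[tS le_tz].
by rewrite inE tS (wage_le_trans le_tz le_zy).
Qed.

Lemma affordable_below S y z :
  y \in affordable S -> z \in S :\: affordable S -> wle y z.
Proof.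
move=> yA /setDP[zS zA]; case/orP: (wage_le_total y z) => // le_zy.
by rewrite (affordable_downward yA zS le_zy) in zA.
Qed.

Lemma ex_first_rejected S : affordable S != S ->
  exists2 z, z \in S :\: affordable S & {in S :\: affordable S, forall y, wle z y}.
Proof.
move=> AnS; have /set0Pn[x0 x0R] : S :\: affordable S != set0.
  by rewrite setD_eq0; apply: contra AnS => sSA; rewrite eqEsubset affordable_sub.
exact: ex_wage_min x0R.
Qed.

Section FirstRejected.

Variables (S : {set T}) (z : T).
Hypotheses (zR : z \in S :\: affordable S)
           (zmin : {in S :\: affordable S, forall y, wle z y}).

Lemma prefix_first_rejected : prefix S z \subset z |: affordable S.
Proof.
apply/subsetP => y /setIdP[yS le_yz]; apply/setU1P.
have [yA|yA] := boolP (y \in affordable S); [by right | left].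
by apply: wage_le_anti le_yz _; apply: zmin; rewrite in_setD yA yS.
Qed.

Lemma first_rejected_budget : B <= w z + wsum w (affordable S).
Proof.
have /setDP[zS zA] := zR.
have le_B : B <= wsum w (prefix S z) by move: zA; rewrite inE zS -leNgt.
apply: (le_trans le_B); rewrite -wsumU1; last by move: zA; apply: contra; rewrite inE.
exact: wsum_subset prefix_first_rejected.
Qed.

End FirstRejected.

Lemma wsum_affordable_lt S : affordable S != set0 -> wsum w (affordable S) < B.
Proof.
case/set0Pn => y0 /ex_wage_max[a aA amax].
have /setIdP[aS lt_aB] := aA.
apply: (le_lt_trans _ lt_aB); apply: wsum_subset; apply/subsetP => y yA.
by rewrite inE amax // (subsetP (affordable_sub S)).
Qed.

Lemma top_notin_affordable S m : {in S, forall y, wle y m} ->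
  affordable S != S -> m \notin affordable S.
Proof.
move=> top; apply: contra => /setIdP[_]; rewrite (eqP (introT (prefix_topP S m) top)).
move=> lt_SB; apply/eqP/setP => y; rewrite inE.
have [yS|//] := boolP (y \in S).
exact: le_lt_trans (wsum_subset (prefix_sub S y)) lt_SB.
Qed.

Lemma greedy_set_top S m : m \in S -> {in S, forall y, wle y m} ->
  greedy_set S = m |: affordable S.
Proof.
move=> mS top; apply/setP => x; rewrite in_setU1 !inE.
have [xS|xS] /= := boolP (x \in S); last first.
  by rewrite orbF; apply/esym/negbTE; apply: contraNneq xS => ->.
congr (_ || _); apply/prefix_topP/eqP => [xtop|->//].
exact: wage_le_anti (top x xS) (xtop m mS).
Qed.

Lemma greedy_set_full S : affordable S = S -> greedy_set S = S.
Proof.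
by move=> AS; apply/eqP; rewrite eqEsubset greedy_set_sub -{1}AS affordable_greedy.
Qed.

Lemma card_greedy_set S : #|greedy_set S| = minn #|affordable S|.+1 #|S|.
Proof.
have [AS|AnS] := eqVneq (affordable S) S.
  by rewrite greedy_set_full // AS; apply/esym/minn_idPr/leqnSn.
have /set0Pn[x0 x0S] : S != set0.
  by apply: contraNneq AnS => ->; rewrite -subset0 affordable_sub.
have [m mS top] := ex_wage_max x0S.
rewrite (greedy_set_top mS top) cardsU1 (top_notin_affordable top AnS) add1n.
by apply/esym/minn_idPl/proper_card; rewrite properEneq AnS affordable_sub.
Qed.

Lemma greedy_set_budget S : affordable S != S -> B <= wsum w (greedy_set S).
Proof.
move=> AnS; have [z zR zmin] := ex_first_rejected AnS.
have /setDP[zS _] := zR; have [m mS top] := ex_wage_max zS.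
rewrite (greedy_set_top mS top) wsumU1 ?(top_notin_affordable top AnS) //.
apply: (le_trans (first_rejected_budget zR zmin)); rewrite lerD2r.
exact/wage_le_wage/top.
Qed.

Lemma affordable_card_mono Y2 Y1 :
  Y2 \subset Y1 -> (#|affordable Y2| <= #|affordable Y1|)%N.
Proof.
move=> sY; rewrite leqNgt; apply/negP => lt_A.
have A1nY1 : affordable Y1 != Y1.
  apply: contraTneq lt_A => ->; rewrite -leqNgt.
  exact: leq_trans (subset_leq_card (affordable_sub Y2)) (subset_leq_card sY).
have A2n0 : affordable Y2 != set0 by rewrite -card_gt0 (leq_ltn_trans _ lt_A).
have [z zR zmin] := ex_first_rejected A1nY1.
have exch : wsum w (affordable Y1) + w z <= wsum w (affordable Y2).
  apply: wsum_exchange (w_ge0 z) _ _ lt_A => y /setDP[yA yA'].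
  - exact/wage_le_wage/(affordable_below yA zR).
  - apply/wage_le_wage/zmin; rewrite in_setD yA' (subsetP sY) //.
    exact: subsetP (affordable_sub Y2) y yA.
suff : B < B by rewrite ltxx.
apply: (le_lt_trans _ (wsum_affordable_lt A2n0)); apply: (le_trans _ exch).
by rewrite addrC; apply: first_rejected_budget zR zmin.
Qed.

Lemma wsum_setU1_affordable_lt S x : x \notin S -> {in S, forall y, wle y x} ->
  (wsum w (x |: affordable S) < B) = (wsum w (x |: S) < B).
Proof.
move=> xS top; have [->//|AnS] := eqVneq (affordable S) S.
apply/idP/idP => lt_xB; last first.
  exact: le_lt_trans (wsum_subset (setUS _ (affordable_sub S))) lt_xB.
have [z zR zmin] := ex_first_rejected AnS; have /setDP[zS _] := zR.
suff : B < B by rewrite ltxx.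
apply: le_lt_trans lt_xB.
rewrite wsumU1; last by apply: contra xS; apply/subsetP/affordable_sub.
apply: (le_trans (first_rejected_budget zR zmin)); rewrite lerD2r.
exact/wage_le_wage/top.
Qed.

Lemma affordable_setU1_top S x : x \notin S -> {in S, forall y, wle y x} ->
  affordable (x |: S) = greedy_step w B (affordable S) x.
Proof.
move=> xS top; rewrite /greedy_step wsum_setU1_affordable_lt //.
have preSx : prefix (x |: S) x = x |: S by apply/eqP/prefix_topP/setU1_top.
apply/setP => y; rewrite [LHS]inE.
have [->|yx] := eqVneq y x.
  rewrite preSx setU11 /=; case: ifP => _; first by rewrite setU11.
  by apply/esym/negbTE; apply: contra xS; apply/subsetP/affordable_sub.
transitivity (y \in affordable S); last by case: ifP; rewrite ?in_setU1 ?(negbTE yx).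
rewrite in_setU1 (negbTE yx) [RHS]inE /=; have [yS|//] := boolP (y \in S).
by rewrite prefix_setU1_top.
Qed.

Lemma foldl_greedy_step p : pairwise wle p -> uniq p ->
  foldl (greedy_step w B) set0 p = affordable [set y in p].
Proof.
elim/last_ind: p => [|p x IHp]; first by move=> _ _; apply/setP => y; rewrite !inE.
rewrite pairwise_rcons rcons_uniq => /andP[top sorted_p] /andP[xp uniq_p].
have -> : [set y in rcons p x] = x |: [set y in p].
  by apply/setP => y; rewrite !inE mem_rcons inE.
rewrite foldl_rcons IHp // affordable_setU1_top ?inE // => y.
by rewrite inE; apply: (allP top).
Qed.

Lemma Ch_greedyE X : Ch_greedy w B r X = greedy_set X.
Proof.
rewrite /Ch_greedy; have := sort_sorted wage_le_total (enum X).
have : uniq (sort wle (enum X)) by rewrite sort_uniq enum_uniq.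
have : sort wle (enum X) =i X by move=> y; rewrite mem_sort mem_enum.
case: (sort wle (enum X)) => [|x0 s] mem_s uniq_s sorted_s.
  have -> : X = set0 by apply/setP => y; rewrite -mem_s inE.
  by apply/esym/eqP; rewrite -subset0 greedy_set_sub.
rewrite lastI in mem_s uniq_s sorted_s.
move: sorted_s uniq_s; rewrite (sorted_pairwise wage_le_trans) pairwise_rcons rcons_uniq.
set m := last x0 s; set S := [set y in belast x0 s].
move=> /andP[top sorted_p] /andP[mp uniq_p].
have topS : {in S, forall y, wle y m} by move=> y; rewrite inE; apply: (allP top).
have mS : m \notin S by rewrite inE.
have -> : X = m |: S by apply/setP => y; rewrite -mem_s mem_rcons !inE.
rewrite foldl_greedy_step // (greedy_set_top (setU11 _ _) (setU1_top topS)).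
rewrite affordable_setU1_top // /greedy_step.
by case: ifP => // _; rewrite setUA setUid.
Qed.

Lemma greedy_set_SUB : SUB greedy_set.
Proof.
move=> Y2 Y1 sY; apply/subsetP => x /setDP[xY2 xC2].
have xY1 := subsetP sY _ xY2.
rewrite in_setD xY1 andbT inE xY1 /= negb_or.
move: xC2; rewrite inE xY2 /= negb_or => /andP[top2 lt2].
apply/andP; split.
- apply: contra top2 => /prefix_topP top1; apply/prefix_topP => y yY2.
  exact/top1/(subsetP sY).
- rewrite -leNgt in lt2; rewrite -leNgt; apply: (le_trans lt2).
  exact/wsum_subset/prefixS.
Qed.

Lemma greedy_set_LAD : LAD greedy_set.
Proof.
move=> Y2 Y1 sY; rewrite !card_greedy_set leq_min !geq_min ltnS.
by rewrite affordable_card_mono // subset_leq_card // !orbT.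
Qed.

Lemma greedy_set_COM : COM w B (wsum w) greedy_set.
Proof.
move=> Y2 Y1 sY le_Y2.
have [AY1|AnY1] := eqVneq (affordable Y1) Y1.
  by rewrite greedy_set_full //; apply: wsum_subset.
by rewrite (max_r (greedy_set_budget AnY1)) in le_Y2.
Qed.

End GreedyChoice.

Theorem lemma5 (T : finType) (R : realFieldType) (w : T -> R) (B gamma : R)
  (r : T -> nat) :
  0 < B ->
  (forall x : T, 0 < w x <= B) ->
  injective r ->
  0 < gamma ->
  let f := fun Y : {set T} => gamma * wsum w Y in
  let Ch := Ch_greedy w B r in
  [/\ SUB Ch, IRC Ch, LAD Ch & COM w B f Ch].
Proof.
move=> _ w_bounds r_inj gamma_gt0 f Ch.
have w_gt0 x : 0 < w x by case/andP: (w_bounds x).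
have ChE : Ch =1 greedy_set w r B := Ch_greedyE B w_gt0 r_inj.
have Ch_SUB : SUB Ch by move=> Y2 Y1; rewrite !ChE; apply: greedy_set_SUB.
have Ch_LAD : LAD Ch by move=> Y2 Y1; rewrite !ChE; apply: greedy_set_LAD.
split=> //; first by apply: SUB_LAD_IRC => // Y; rewrite ChE greedy_set_sub.
move=> Y2 Y1 sY; rewrite /f ler_pM2l // !ChE; exact: greedy_set_COM.
Qed.
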